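(* For every finite multiset $\Delta$ and formulas $\varphi,\psi,\chi$: if $\Delta,\Box\varphi\to\psi\Rightarrow\chi$ has a proof of height $h$ in $\mathsf{G4iSLt}$, then $\Delta,\psi\Rightarrow\chi$ has a proof in $\mathsf{G4iSLt}$ of height at most $h$.
   Context: Formulas are built by the grammar $\varphi ::= p \mid \bot \mid \varphi\land\varphi \mid \varphi\lor\varphi \mid \varphi\to\varphi \mid \Box\varphi$, with $p$ ranging over a countably infinite set of propositional variables. For a multiset $\Gamma$, $\Box\Gamma=\{\Box\psi:\psi\in\Gamma\}$; a boxed formula is one of the form $\Box\psi$. A sequent is $\Gamma\Rightarrow\chi$ with $\Gamma$ a finite multiset of formulas and $\chi$ a formula. The sequent calculus $\mathsf{G4iSLt}$ has the following rules, where $p$ is a propositional variable and $\Phi$ always denotes a multiset containing no boxed formula: (⊥L) $\bot,\Gamma\Rightarrow\chi$ (no premise); (IdP) $\Gamma,p\Rightarrow p$ (no premise); (∧L) from $\Gamma,\varphi,\psi\Rightarrow\chi$ infer $\Gamma,\varphi\land\psi\Rightarrow\chi$; (∧R) from $\Gamma\Rightarrow\varphi$ and $\Gamma\Rightarrow\psi$ infer $\Gamma\Rightarrow\varphi\land\psi$; (∨L) from $\Gamma,\varphi\Rightarrow\chi$ and $\Gamma,\psi\Rightarrow\chi$ infer $\Gamma,\varphi\lor\psi\Rightarrow\chi$; (∨R$_i$), $i\in\{1,2\}$: from $\Gamma\Rightarrow\varphi_i$ infer $\Gamma\Rightarrow\varphi_1\lor\varphi_2$; (p→L) from $\Gamma,p,\varphi\Rightarrow\chi$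 infer $\Gamma,p,p\to\varphi\Rightarrow\chi$; (→R) from $\Gamma,\varphi\Rightarrow\psi$ infer $\Gamma\Rightarrow\varphi\to\psi$; (□→L) from $\Phi,\Gamma,\psi,\Box\varphi\Rightarrow\varphi$ and $\Phi,\Box\Gamma,\psi\Rightarrow\chi$ infer $\Phi,\Box\Gamma,\Box\varphi\to\psi\Rightarrow\chi$; (SLtR) from $\Phi,\Gamma,\Box\varphi\Rightarrow\varphi$ infer $\Phi,\Box\Gamma\Rightarrow\Box\varphi$; (∧→L) from $\Gamma,\varphi\to(\psi\to\chi)\Rightarrow\delta$ infer $\Gamma,(\varphi\land\psi)\to\chi\Rightarrow\delta$; (∨→L) from $\Gamma,\varphi\to\chi,\psi\to\chi\Rightarrow\delta$ infer $\Gamma,(\varphi\lor\psi)\to\chi\Rightarrow\delta$; (→→L) from $\Gamma,\psi\to\chi\Rightarrow\varphi\to\psi$ and $\Gamma,\chi\Rightarrow\delta$ infer $\Gamma,(\varphi\to\psi)\to\chi\Rightarrow\delta$. A proof of a sequent $S$ is a finite tree of sequents with root $S$ in which each interior node together with its children forms an instance of a rule (conclusion, premises) and each leaf is the conclusion of a premise-free rule; $S$ is provable if it has a proof. The height of a proof is the maximum number of nodes on a path from the root to a leaf. *)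

From Stdlib Require Import List Permutation.
Import ListNotations.

Inductive form : Type :=
| Var : nat -> form
| Bot : form
| And : form -> form -> form
| Or  : form -> form -> form
| Imp : form -> form -> form
| Box : form -> form.

(* A sequent Gamma => chi; Gamma is a finite multiset, represented by a list
   taken up to permutation. *)
Definition sequent : Type := (list form * form)%type.

Definition seq_eq (s t : sequent) : Prop :=
  Permutation (fst s) (fst t) /\ snd s = snd t.

Definition is_boxed (f : form) : Prop :=
  match f with Box _ => True | _ => False end.

Definition box_free (Phi : list form) : Prop :=
  Forall (fun f => ~ is_boxed f) Phi.

Inductive rule0 : list sequent -> sequent -> Prop :=
| R_BotL G c : rule0 [] (Bot :: G, c)
| R_IdP G p : rule0 [] (Var p :: G, Var p)
| R_AndL G a b c : rule0 [(a :: b :: G, c)] (And a b :: G, c)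
| R_AndR G a b : rule0 [(G, a); (G, b)] (G, And a b)
| R_OrL G a b c : rule0 [(a :: G, c); (b :: G, c)] (Or a b :: G, c)
| R_OrR1 G a b : rule0 [(G, a)] (G, Or a b)
| R_OrR2 G a b : rule0 [(G, b)] (G, Or a b)
| R_pImpL G p a c :
    rule0 [(Var p :: a :: G, c)] (Var p :: Imp (Var p) a :: G, c)
| R_ImpR G a b : rule0 [(a :: G, b)] (G, Imp a b)
| R_BoxImpL Phi Gm phi psi c :
    box_free Phi ->
    rule0 [(Phi ++ Gm ++ [psi; Box phi], phi);
           (Phi ++ map Box Gm ++ [psi], c)]
          (Phi ++ map Box Gm ++ [Imp (Box phi) psi], c)
| R_SLtR Phi Gm phi :
    box_free Phi ->
    rule0 [(Phi ++ Gm ++ [Box phi], phi)] (Phi ++ map Box Gm, Box phi)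
| R_AndImpL G a b c d :
    rule0 [(Imp a (Imp b c) :: G, d)] (Imp (And a b) c :: G, d)
| R_OrImpL G a b c d :
    rule0 [(Imp a c :: Imp b c :: G, d)] (Imp (Or a b) c :: G, d)
| R_ImpImpL G a b c d :
    rule0 [(Imp b c :: G, Imp a b); (c :: G, d)] (Imp (Imp a b) c :: G, d).

Definition rule (ps : list sequent) (s : sequent) : Prop :=
  exists ps0 s0, rule0 ps0 s0 /\ Forall2 seq_eq ps ps0 /\ seq_eq s s0.

Inductive ptree : Type := Node : sequent -> list ptree -> ptree.

Definition root (t : ptree) : sequent := match t with Node s _ => s end.

(* A proof: every interior node with its children is a rule instance, and
   every leaf is the conclusion of a premise-free rule (rule [] s). *)
Inductive is_proof : ptree -> Prop :=
| is_proof_node s ts :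
    rule (map root ts) s -> Forall is_proof ts -> is_proof (Node s ts).

(* Height = maximum number of nodes on a path from the root to a leaf. *)
Fixpoint height (t : ptree) : nat :=
  match t with Node _ ts => S (list_max (map height ts)) end.

(* Both the
   theorem and an auxiliary fact are instances of one pattern: replace an
   antecedent formula A by B without increasing the height.  When A is
   "modal" (a box, or an implication with boxed antecedent) A is never
   principal in a non-modal rule, so for those rules the replacement just
   permutes past the last rule ([replacement_step]); only the rules (□→L)
   and (SLtR), whose contexts split into boxed and box-free parts, need a
   separate argument.  This yields:
   - [box_elim]:     □φ, Γ ⇒ χ  at height n gives  φ, Γ ⇒ χ  at height n;
   - [boximp_elim]:  □φ→ψ, Γ ⇒ χ at height n gives  ψ, Γ ⇒ χ  at height n,
     using [box_elim] when ψ is itself boxed and enters the boxed context;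
   and the main theorem is [boximp_elim] up to reordering the antecedent. *)

From Stdlib Require Import List Permutation Lia Arith.
Import ListNotations.

Definition form_eq_dec : forall x y : form, {x = y} + {x <> y}.
Proof. decide equality; apply Nat.eq_dec. Defined.

Definition ind (a y : form) : nat := if form_eq_dec a y then 1 else 0.

Lemma count_cons (a : form) (l : list form) (y : form) :
  count_occ form_eq_dec (a :: l) y = ind a y + count_occ form_eq_dec l y.
Proof. unfold ind; simpl; destruct (form_eq_dec a y); lia. Qed.

Lemma count_nil (y : form) : count_occ form_eq_dec [] y = 0.
Proof. reflexivity. Qed.

Lemma map_Box_cons (a : form) (l : list form) : map Box (a :: l) = Box a :: map Box l.
Proof. reflexivity. Qed.

(* Proves a permutation goal between explicit list expressions from the
   permutation hypotheses in context: both are turned into equations between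
   occurrence counts, which are then linear arithmetic. *)
Ltac perm_tac :=
  repeat progress rewrite ?map_app, ?map_Box_cons in *;
  apply (proj2 (Permutation_count_occ form_eq_dec _ _));
  let y := fresh "y" in intro y;
  repeat match goal with H : Permutation _ _ |- _ =>
     let H' := fresh "HC" in
     pose proof (proj1 (Permutation_count_occ form_eq_dec _ _) H y) as H'; clear H end;
  repeat progress rewrite ?count_occ_app, ?count_cons, ?count_nil in *; lia.

Lemma seq_eq_refl (s : sequent) : seq_eq s s.
Proof. split; [apply Permutation_refl | reflexivity]. Qed.

Lemma seq_eq_sym (s1 s2 : sequent) : seq_eq s1 s2 -> seq_eq s2 s1.
Proof. intros [? ?]; split; [apply Permutation_sym | ]; auto. Qed.

Lemma seq_eq_trans (s1 s2 s3 : sequent) : seq_eq s1 s2 -> seq_eq s2 s3 -> seq_eq s1 s3.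
Proof. intros [? ?] [? ?]; split; [eapply Permutation_trans | congruence]; eauto. Qed.

Definition derivable (n : nat) (s : sequent) : Prop :=
  exists t, is_proof t /\ seq_eq (root t) s /\ height t <= n.

Lemma derivable_perm (n : nat) (L L' : list form) (c : form) :
  derivable n (L, c) -> Permutation L L' -> derivable n (L', c).
Proof.
  intros [t [Ht [[Hp Hc] Hh]]] HP. exists t; repeat split; auto.
  simpl in *; eapply Permutation_trans; eauto.
Qed.

Lemma derivable_mono (n m : nat) (s : sequent) : derivable n s -> n <= m -> derivable m s.
Proof. intros [t [Ht [Hr Hh]]] Hnm; exists t; split; [exact Ht | split; [exact Hr | lia]]. Qed.

Lemma derivable_rule (n : nat) (ps : list sequent) (s : sequent) :
  rule0 ps s -> Forall (derivable n) ps -> derivable (S n) s.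
Proof.
  intros Hr HF.
  assert (Hts : exists ts, Forall is_proof ts /\ Forall2 seq_eq (map root ts) ps /\
                           Forall (fun t => height t <= n) ts).
  { clear Hr. induction HF as [|p ps' [t [Ht [He Hh]]] HF [ts [A [B C]]]].
    - exists []; repeat constructor.
    - exists (t :: ts); repeat split; constructor; auto. }
  destruct Hts as [ts [Hproofs [Hroots Hheights]]].
  exists (Node s ts); split; [|split].
  - constructor; auto. exists ps, s. auto using seq_eq_refl.
  - apply seq_eq_refl.
  - simpl. apply le_n_S, list_max_le, Forall_map. exact Hheights.
Qed.

Lemma premises_derivable (m : nat) (ts : list ptree) (ps : list sequent) :
  Forall2 seq_eq (map root ts) ps -> Forall is_proof ts ->
  Forall (fun t => height t <= m) ts -> Forall (derivable m) ps.
Proof.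
  revert ps; induction ts as [|t ts IH]; intros ps Hr Hp Hh;
    inversion Hr; subst; constructor; inversion Hp; inversion Hh; subst.
  - exists t; auto.
  - eapply IH; eauto.
Qed.

Lemma derivable_zero (s : sequent) : ~ derivable 0 s.
Proof. intros [[s' ts] [_ [_ Hh]]]. simpl in Hh. lia. Qed.

Lemma derivable_inv (m : nat) (s : sequent) :
  derivable (S m) s ->
  exists ps s0, rule0 ps s0 /\ seq_eq s s0 /\ Forall (derivable m) ps.
Proof.
  intros [t [Ht [He Hh]]]. destruct Ht as [s' ts [ps0 [s0 [Hr0 [HF2 Hs]]]] HF].
  simpl in He, Hh. exists ps0, s0. split; [exact Hr0 | split].
  - eapply seq_eq_trans; [apply seq_eq_sym; exact He | exact Hs].
  - eapply premises_derivable; eauto.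
    apply (proj1 (Forall_map height (fun k => k <= m) ts)), list_max_le. lia.
Qed.

Ltac fromhyp := match goal with H : derivable ?n (?L, ?c) |- derivable ?n (?L', ?c) =>
  apply (derivable_perm _ _ _ _ H); perm_tac end.

Ltac prems := repeat (apply Forall_cons; [fromhyp|]); apply Forall_nil.

Ltac splitF := repeat match goal with H : Forall _ (_ :: _) |- _ =>
  apply Forall_cons_iff in H; destruct H end.

Ltac finish R := eapply derivable_perm; [apply (derivable_rule _ _ _ R); prems | perm_tac].

Lemma boxed_dec (f : form) : (exists g, f = Box g) \/ ~ is_boxed f.
Proof. destruct f; try (right; simpl; tauto). left; eauto. Qed.

Definition unbox (f : form) : form := match f with Box g => g | _ => f end.

Lemma unbox_unboxed (f : form) : ~ is_boxed f -> unbox f = f.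
Proof. destruct f; simpl; tauto. Qed.

Lemma box_free_middle (K1 K2 : list form) (x : form) :
  box_free (K1 ++ x :: K2) -> ~ is_boxed x /\ box_free (K1 ++ K2).
Proof.
  unfold box_free; rewrite !Forall_app; intros [H1 H2]; inversion H2; auto.
Qed.

Lemma modal_context_split (A : form) (G Phi Gm R : list form) :
  Permutation (A :: G) (Phi ++ map Box Gm ++ R) ->
  (exists K1 K2, Phi = K1 ++ A :: K2) \/
  (exists z K1 K2, A = Box z /\ Gm = K1 ++ z :: K2) \/
  In A R.
Proof.
  intros Hp. pose proof (Permutation_in _ Hp (in_eq _ _)) as Hin.
  apply in_app_or in Hin as [Hin | Hin]; [left; now apply in_split|].
  apply in_app_or in Hin as [Hin | Hin]; [|now right; right].
  apply in_map_iff in Hin as [z [Hz Hin]]. apply in_split in Hin as [K1 [K2 ->]].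
  right; left; eauto.
Qed.

(* A formula B can be added to the conclusion of (SLtR): a boxed B = □z
   joins the boxed part and contributes z to the premise, an unboxed B joins
   the box-free part. *)
Lemma SLtR_with (m : nat) (B : form) (Phi Gm : list form) (al : form) :
  box_free Phi ->
  derivable m (unbox B :: Phi ++ Gm ++ [Box al], al) ->
  derivable (S m) (B :: Phi ++ map Box Gm, Box al).
Proof.
  intros Hbf Hprem. destruct (boxed_dec B) as [[z ->] | Hnb].
  - simpl in Hprem. finish (R_SLtR Phi (z :: Gm) al Hbf).
  - rewrite (unbox_unboxed B Hnb) in Hprem.
    finish (R_SLtR (B :: Phi) Gm al (Forall_cons B Hnb Hbf : box_free (B :: Phi))).
Qed.

Lemma BoxImpL_with (m : nat) (B : form) (Phi Gm : list form) (al be c : form) :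
  box_free Phi ->
  derivable m (unbox B :: Phi ++ Gm ++ [be; Box al], al) ->
  derivable m (B :: Phi ++ map Box Gm ++ [be], c) ->
  derivable (S m) (B :: Phi ++ map Box Gm ++ [Imp (Box al) be], c).
Proof.
  intros Hbf Hleft Hright. destruct (boxed_dec B) as [[z ->] | Hnb].
  - simpl in Hleft. finish (R_BoxImpL Phi (z :: Gm) al be c Hbf).
  - rewrite (unbox_unboxed B Hnb) in Hleft.
    finish (R_BoxImpL (B :: Phi) Gm al be c (Forall_cons B Hnb Hbf : box_free (B :: Phi))).
Qed.

(* Formulas that are never principal in a non-modal rule. *)
Definition modal_formula (A : form) : Prop :=
  match A with Box _ => True | Imp (Box _) _ => True | _ => False end.

Section Replacement.

(* Replacing A by B at height m+1, assuming it is possible at height m and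
   that the cases where the last rule is modal have been dealt with. *)
Variables (A B : form) (m : nat).
Hypothesis A_modal : modal_formula A.
Hypothesis IH : forall G c, derivable m (A :: G, c) -> derivable m (B :: G, c).
Hypothesis on_BoxImpL : forall Phi Gm al be G c,
  box_free Phi ->
  Permutation (A :: G) (Phi ++ map Box Gm ++ [Imp (Box al) be]) ->
  derivable m (Phi ++ Gm ++ [be; Box al], al) ->
  derivable m (Phi ++ map Box Gm ++ [be], c) ->
  derivable (S m) (B :: G, c).
Hypothesis on_SLtR : forall Phi Gm al G,
  box_free Phi ->
  Permutation (A :: G) (Phi ++ map Box Gm) ->
  derivable m (Phi ++ Gm ++ [Box al], al) ->
  derivable (S m) (B :: G, Box al).

(* A occurs in the side context G' of a left rule with principal formulas
   X, ...: being modal, it is none of the principal formulas. *)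
Ltac locate Hp :=
  let Hin := fresh in
  pose proof (Permutation_in _ Hp (in_eq _ _)) as Hin; simpl in Hin;
  repeat (destruct Hin as [Hin|Hin];
          [rewrite <- Hin in A_modal; simpl in A_modal; contradiction|]);
  apply in_split in Hin; destruct Hin as [K1 [K2 ->]].

Lemma replacement_step (G : list form) (c : form) :
  derivable (S m) (A :: G, c) -> derivable (S m) (B :: G, c).
Proof.
  intros HD. destruct (derivable_inv _ _ HD) as [ps [s0 [Hr [[Hp Hc] HF]]]].
  destruct Hr as [G' c'|G' p|G' a b c'|G' a b|G' a b c'|G' a b|G' a b|G' p a c'|G' a b
    |Phi Gm al be c' Hbf|Phi Gm al Hbf|G' a b c' d|G' a b c' d|G' a b c' d];
  simpl in Hp, Hc; subst c; splitF.
  - locate Hp. finish (R_BotL (B :: K1 ++ K2) c').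
  - locate Hp. finish (R_IdP (B :: K1 ++ K2) p).
  - locate Hp.
    assert (R1 : derivable m (B :: a :: b :: K1 ++ K2, c')) by (apply IH; fromhyp).
    finish (R_AndL (B :: K1 ++ K2) a b c').
  - assert (R1 : derivable m (B :: G, a)) by (apply IH; fromhyp).
    assert (R2 : derivable m (B :: G, b)) by (apply IH; fromhyp).
    finish (R_AndR (B :: G) a b).
  - locate Hp.
    assert (R1 : derivable m (B :: a :: K1 ++ K2, c')) by (apply IH; fromhyp).
    assert (R2 : derivable m (B :: b :: K1 ++ K2, c')) by (apply IH; fromhyp).
    finish (R_OrL (B :: K1 ++ K2) a b c').
  - assert (R1 : derivable m (B :: G, a)) by (apply IH; fromhyp).
    finish (R_OrR1 (B :: G) a b).
  - assert (R1 : derivable m (B :: G, b)) by (apply IH; fromhyp).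
    finish (R_OrR2 (B :: G) a b).
  - locate Hp.
    assert (R1 : derivable m (B :: Var p :: a :: K1 ++ K2, c')) by (apply IH; fromhyp).
    finish (R_pImpL (B :: K1 ++ K2) p a c').
  - assert (R1 : derivable m (B :: a :: G, b)) by (apply IH; fromhyp).
    finish (R_ImpR (B :: G) a b).
  - eapply on_BoxImpL; eauto.
  - eapply on_SLtR; eauto.
  - locate Hp.
    assert (R1 : derivable m (B :: Imp a (Imp b c') :: K1 ++ K2, d)) by (apply IH; fromhyp).
    finish (R_AndImpL (B :: K1 ++ K2) a b c' d).
  - locate Hp.
    assert (R1 : derivable m (B :: Imp a c' :: Imp b c' :: K1 ++ K2, d))
      by (apply IH; fromhyp).
    finish (R_OrImpL (B :: K1 ++ K2) a b c' d).
  - locate Hp.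
    assert (R1 : derivable m (B :: Imp b c' :: K1 ++ K2, Imp a b)) by (apply IH; fromhyp).
    assert (R2 : derivable m (B :: c' :: K1 ++ K2, d)) by (apply IH; fromhyp).
    finish (R_ImpImpL (B :: K1 ++ K2) a b c' d).
Qed.

End Replacement.

Lemma unbox_derivable (n : nat) :
  (forall z G c, derivable n (Box z :: G, c) -> derivable n (z :: G, c)) ->
  forall B G c, derivable n (B :: G, c) -> derivable n (unbox B :: G, c).
Proof. intros Hbox [] G c HD; simpl; auto. Qed.

(* □φ may be replaced by φ in the antecedent without increasing height.
   In a modal rule □φ sits in the boxed part, where φ already occurs in the
   critical premise. *)
Lemma box_elim : forall n phi G c,
  derivable n (Box phi :: G, c) -> derivable n (phi :: G, c).
Proof.
  induction n as [|m IH]; intros phi G c HD;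
    [exfalso; exact (derivable_zero _ HD)|].
  revert G c HD. apply (replacement_step (Box phi) phi m I (IH phi)).
  - intros Phi Gm al be G c Hbf Hp Hleft Hright.
    destruct (modal_context_split _ _ _ _ _ Hp)
      as [[K1 [K2 ->]] | [[z [K1 [K2 [Hz ->]]]] | Hin]].
    + exfalso. apply (proj1 (box_free_middle _ _ _ Hbf)). exact I.
    + injection Hz as <-.
      eapply derivable_perm;
        [apply (BoxImpL_with m phi Phi (K1 ++ K2) al be c Hbf) | perm_tac].
      * apply (unbox_derivable m IH). fromhyp.
      * apply IH. fromhyp.
    + destruct Hin as [Hin | []]. discriminate.
  - intros Phi Gm al G Hbf Hp Hprem.
    rewrite <- (app_nil_r (map Box Gm)) in Hp.
    destruct (modal_context_split _ _ _ _ _ Hp)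
      as [[K1 [K2 ->]] | [[z [K1 [K2 [Hz ->]]]] | []]].
    + exfalso. apply (proj1 (box_free_middle _ _ _ Hbf)). exact I.
    + injection Hz as <-.
      eapply derivable_perm; [apply (SLtR_with m phi Phi (K1 ++ K2) al Hbf) | perm_tac].
      apply (unbox_derivable m IH). fromhyp.
Qed.

(* In a modal rule
   □φ→ψ is either principal in (□→L), whose right premise is the goal, or
   lies in the box-free part; then ψ takes its place, via [box_elim] when ψ
   is boxed. *)
Lemma boximp_elim : forall n phi psi G c,
  derivable n (Imp (Box phi) psi :: G, c) -> derivable n (psi :: G, c).
Proof.
  induction n as [|m IH]; intros phi psi G c HD;
    [exfalso; exact (derivable_zero _ HD)|].
  revert G c HD. apply (replacement_step (Imp (Box phi) psi) psi m I (IH phi psi)).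
  - intros Phi Gm al be G c Hbf Hp Hleft Hright.
    destruct (modal_context_split _ _ _ _ _ Hp)
      as [[K1 [K2 ->]] | [[z [K1 [K2 [Hz _]]]] | Hin]].
    + pose proof (proj2 (box_free_middle _ _ _ Hbf)) as Hbf'.
      eapply derivable_perm;
        [apply (BoxImpL_with m psi (K1 ++ K2) Gm al be c Hbf') | perm_tac].
      * apply (unbox_derivable m (box_elim m)), (IH phi). fromhyp.
      * apply (IH phi). fromhyp.
    + discriminate Hz.
    + destruct Hin as [Hin | []]. injection Hin as -> ->.
      apply (derivable_mono m); [fromhyp | lia].
  - intros Phi Gm al G Hbf Hp Hprem.
    rewrite <- (app_nil_r (map Box Gm)) in Hp.
    destruct (modal_context_split _ _ _ _ _ Hp)
      as [[K1 [K2 ->]] | [[z [K1 [K2 [Hz _]]]] | []]].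
    + pose proof (proj2 (box_free_middle _ _ _ Hbf)) as Hbf'.
      eapply derivable_perm; [apply (SLtR_with m psi (K1 ++ K2) Gm al Hbf') | perm_tac].
      apply (unbox_derivable m (box_elim m)), (IH phi). fromhyp.
    + discriminate Hz.
Qed.

Theorem mainTheorem8 :
  forall (Delta : list form) (phi psi chi : form) (t : ptree) (h : nat),
    is_proof t ->
    seq_eq (root t) (Delta ++ [Imp (Box phi) psi], chi) ->
    height t = h ->
    exists t' : ptree,
      is_proof t' /\ seq_eq (root t') (Delta ++ [psi], chi) /\ height t' <= h.
Proof.
  intros Delta phi psi chi t h Ht Hroot Hh.
  assert (HD : derivable h (Delta ++ [Imp (Box phi) psi], chi)).
  { exists t. repeat split; auto; [apply Hroot | apply Hroot | lia]. }
  apply (derivable_perm _ _ (Imp (Box phi) psi :: Delta)) in HD;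
    [| apply Permutation_sym, Permutation_cons_append].
  apply boximp_elim in HD.
  apply (derivable_perm _ _ (Delta ++ [psi])) in HD; [exact HD|].
  apply Permutation_cons_append.
Qed.
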